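(* Let $G=(V,E)$ be a $k$-uniform cored hypergraph ($k\ge3$) and let $\mathbf x\in\mathbb R^n$ be an H-eigenvector of its Laplacian tensor $\mathcal L$ corresponding to the H-eigenvalue $\lambda(\mathcal L)$. For each $e\in E$ let $i_e\in e$ be a cored vertex. Then $\prod_{s\in e}x_s\le 0$ for all $e\in E$ when $k$ is even, and $\prod_{s\in e\setminus\{i_e\}}x_s\le0$ for all $e\in E$ when $k$ is odd.
   Context: A $k$-uniform hypergraph $G=(V,E)$ has $V=[n]$ and a nonempty set $E$ of $k$-element subsets of $V$; $d_i$ is the number of edges containing $i$. A cored vertex is a vertex of degree one; $G$ is cored if every edge contains a cored vertex. The Laplacian tensor $\mathcal L=\mathcal D-\mathcal A$ ($\mathcal D$ diagonal with entries $d_i$, $\mathcal A$ with entries $\frac1{(k-1)!}$ at index tuples forming an edge and $0$ otherwise) satisfies $(\mathcal L\mathbf x^{k-1})_i=d_ix_i^{k-1}-\sum_{e\in E,\,i\in e}\prod_{s\in e\setminus\{i\}}x_s$. A real $\lambda$ is an H-eigenvalue with H-eigenvector $\mathbf x\neq0$ if $(\mathcal L\mathbf x^{k-1})_i=\lambda x_i^{k-1}$ for all $i$; $\lambda(\mathcal L)$ is the largest H-eigenvalue. *)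

From HB Require Import structures.
From mathcomp Require Import all_boot all_order all_algebra.
From mathcomp Require Import reals.
Set Implicit Arguments. Unset Strict Implicit. Unset Printing Implicit Defensive.
Import Order.TTheory GRing.Theory Num.Theory.
Local Open Scope ring_scope.

Definition kuniform (n k : nat) (E : {set {set 'I_n}}) : Prop :=
  E != set0 /\ forall e, e \in E -> #|e| = k.

Definition degree (n : nat) (E : {set {set 'I_n}}) (i : 'I_n) : nat :=
  #|[set e in E | i \in e]|.

Definition cored_vertex (n : nat) (E : {set {set 'I_n}}) (i : 'I_n) : Prop :=
  degree E i = 1%N.

Definition cored (n : nat) (E : {set {set 'I_n}}) : Prop :=
  forall e, e \in E -> exists2 i, i \in e & cored_vertex E i.

(* (L x^{k-1})_i = d_i x_i^{k-1} - sum_{e in E, i in e} prod_{s in e\{i}} x_s *)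
Definition Lx (R : realType) (n k : nat) (E : {set {set 'I_n}})
    (x : 'I_n -> R) (i : 'I_n) : R :=
  (degree E i)%:R * x i ^+ k.-1
  - \sum_(e in E | i \in e) \prod_(s in e :\ i) x s.

Definition is_H_eigenpair (R : realType) (n k : nat) (E : {set {set 'I_n}})
    (lam : R) (x : 'I_n -> R) : Prop :=
  (exists i, x i != 0) /\ forall i, Lx k E x i = lam * x i ^+ k.-1.

Definition is_H_eigenvalue (R : realType) (n k : nat) (E : {set {set 'I_n}})
    (lam : R) : Prop :=
  exists x, is_H_eigenpair k E lam x.

Definition is_largest_H_eigenvalue (R : realType) (n k : nat)
    (E : {set {set 'I_n}}) (lam : R) : Prop :=
  is_H_eigenvalue k E lam /\ forall mu, is_H_eigenvalue k E mu -> mu <= lam.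

From HB Require Import structures.
From mathcomp Require Import all_boot all_order all_algebra.
From mathcomp Require Import reals.
From mathcomp Require Import zify lra.
Set Implicit Arguments. Unset Strict Implicit. Unset Printing Implicit Defensive.
Import Order.TTheory GRing.Theory Num.Theory.
Local Open Scope ring_scope.

(* Since k >= 3, every edge through any vertex j contains a vertex other than j
   and a given cored vertex i, so the indicator vector of i is an H-eigenvector
   for the eigenvalue 1 and lambda(L) >= 1.  At a cored vertex i of the edge e
   the eigenvalue equation gives prod_(e \ i) x = (1 - lambda) x_i^(k-1): for
   odd k this is a nonpositive number times an even power, and for even k
   multiplying by x_i yields (1 - lambda) x_i^k <= 0. *)

Lemma edge_has_third_vertex (n k : nat) (E : {set {set 'I_n}})
    (e : {set 'I_n}) (j a : 'I_n) :
  (3 <= k)%N -> kuniform k E -> e \in E ->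
  exists2 s, s \in e :\ j & s != a.
Proof.
move=> hk [_ hE] he.
have card_e := cardsD1 j e; have card_ej := cardsD1 a (e :\ j).
rewrite hE // in card_e.
have : (0 < #|(e :\ j) :\ a|)%N.
  have : (k <= 1 + #|e :\ j|)%N by rewrite {1}card_e leq_add2r leq_b1.
  have : (#|e :\ j| <= 1 + #|e :\ j :\ a|)%N by rewrite {1}card_ej leq_add2r leq_b1.
  lia.
case/card_gt0P => s; rewrite !inE => /and3P [sa sj se].
by exists s; rewrite ?inE ?sj ?se.
Qed.

Lemma edges_at_cored_vertex (n : nat) (E : {set {set 'I_n}}) (e : {set 'I_n})
    (i : 'I_n) :
  e \in E -> i \in e -> cored_vertex E i -> [set e' in E | i \in e'] = [set e].
Proof.
move=> he hie hc; apply/eqP; rewrite eq_sym eqEcard sub1set inE he hie /=.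
by rewrite cards1 -[X in (_ <= X)%N]hc.
Qed.

Lemma Lx_cored_vertex (R : realType) (n k : nat) (E : {set {set 'I_n}})
    (x : 'I_n -> R) (e : {set 'I_n}) (i : 'I_n) :
  e \in E -> i \in e -> cored_vertex E i ->
  Lx k E x i = x i ^+ k.-1 - \prod_(s in e :\ i) x s.
Proof.
move=> he hie hc; rewrite /Lx hc mul1r.
have -> : \sum_(e' in E | i \in e') \prod_(s in e' :\ i) x s
         = \sum_(e' in [set e' in E | i \in e']) \prod_(s in e' :\ i) x s.
  by apply: eq_bigl => e'; rewrite inE.
by rewrite (edges_at_cored_vertex he hie hc) big_set1.
Qed.

Lemma cored_indicator_eigenpair (R : realType) (n k : nat)
    (E : {set {set 'I_n}}) (i : 'I_n) :
  (3 <= k)%N -> kuniform k E -> cored_vertex E i ->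
  is_H_eigenpair k E (1 : R) (fun j => (j == i)%:R).
Proof.
move=> hk hE hc; split; first by exists i; rewrite eqxx oner_eq0.
move=> j; rewrite /Lx mul1r.
have -> : \sum_(e in E | j \in e) \prod_(s in e :\ j) ((s == i)%:R : R) = 0.
  apply: big1 => e /andP [he _].
  have [s hs /negbTE hsi] := edge_has_third_vertex j i hk hE he.
  by rewrite (bigD1 s) //= hsi mul0r.
rewrite subr0; have [->|_] := eqVneq j i; first by rewrite hc mul1r.
by rewrite expr0n (_ : k.-1 == 0%N = false) ?mulr0 //; apply/eqP; lia.
Qed.

Lemma largest_H_eigenvalue_ge1 (R : realType) (n k : nat)
    (E : {set {set 'I_n}}) (lam : R) (i : 'I_n) :
  (3 <= k)%N -> kuniform k E -> cored_vertex E i ->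
  is_largest_H_eigenvalue k E lam -> 1 <= lam.
Proof.
move=> hk hE hc [_ hmax]; apply: hmax.
by exists (fun j => (j == i)%:R); apply: cored_indicator_eigenpair.
Qed.

Lemma H_eigenpair_cored_prod (R : realType) (n k : nat) (E : {set {set 'I_n}})
    (lam : R) (x : 'I_n -> R) (e : {set 'I_n}) (i : 'I_n) :
  is_H_eigenpair k E lam x -> e \in E -> i \in e -> cored_vertex E i ->
  \prod_(s in e :\ i) x s = (1 - lam) * x i ^+ k.-1.
Proof.
move=> [_ hx] he hie hc; have := hx i.
rewrite (Lx_cored_vertex _ _ he hie hc) mulrBl mul1r; lra.
Qed.

Theorem proposition3p1 (R : realType) (n k : nat) (E : {set {set 'I_n}})
    (lam : R) (x : 'I_n -> R) :
  (3 <= k)%N ->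
  kuniform k E ->
  cored E ->
  is_largest_H_eigenvalue k E lam ->
  is_H_eigenpair k E lam x ->
  forall (e : {set 'I_n}) (ie : 'I_n),
    e \in E -> ie \in e -> cored_vertex E ie ->
    (if ~~ odd k then \prod_(s in e) x s <= 0
     else \prod_(s in e :\ ie) x s <= 0).
Proof.
move=> hk hE _ hlam hx e ie he hie hc.
have lam_ge1 := largest_H_eigenvalue_ge1 hk hE hc hlam.
have coef_le0 : 1 - lam <= 0 by rewrite subr_le0.
have prod_e := H_eigenpair_cored_prod hx he hie hc.
have k_predK : k.-1.+1 = k by apply: prednK; lia.
case: ifP => hodd.
  rewrite (bigD1 ie) //=.
  have -> : \prod_(s in e | s != ie) x s = \prod_(s in e :\ ie) x s.
    by apply: eq_bigl => s; rewrite !inE andbC.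
  rewrite prod_e mulrCA -exprS k_predK.
  by apply: mulr_le0_ge0 => //; apply: exprn_even_ge0.
rewrite prod_e; apply: mulr_le0_ge0 => //; apply: exprn_even_ge0.
by rewrite -oddS k_predK; apply/negbFE.
Qed.
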